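(* Let $\mathcal{T}$ be a smooth manifold with local coordinates $(t^a)$ carrying a Riemannian metric $h_{ab}(t)$ with Christoffel symbols $\chi^a_{bc}(t)$, and let $M$ be a smooth $n$-dimensional manifold with local coordinates $(x^i)$ carrying a semi-Riemannian metric $\varphi_{ij}(x)$ with Christoffel symbols $\gamma^k_{ij}(x)$. Let $m\neq0$, $e$ be real constants and $A^{(a)}_{(i)}(t,x)$ a smooth d-tensor on $\mathcal{T}\times M$. On $E^*=J^{1*}(\mathcal{T},M)$, with coordinates $(t^a,x^i,p^a_i)$, let $\frac{\delta}{\delta t^a}=\frac{\partial}{\partial t^a}-\chi^f_{ag}p^g_r\frac{\partial}{\partial p^f_r}$ and $\frac{\delta}{\delta x^i}=\frac{\partial}{\partial x^i}-\underset{2}{N}{}^{(f)}_{(r)i}\frac{\partial}{\partial p^f_r}$ with $\underset{2}{N}{}^{(f)}_{(r)i}=\gamma^s_{ri}\big[\frac{2e}{m}A^{(f)}_{(s)}-p^f_s\big]-\frac{e}{m}\big[\frac{\partial A^{(f)}_{(r)}}{\partial x^i}+\frac{\partial A^{(f)}_{(i)}}{\partial x^r}\big]$. Let $D$ be the linear connection on $E^*$ defined on the adapted frame $\{\frac{\delta}{\delta t^a},\frac{\delta}{\delta x^i},\frac{\partial}{\partial p^a_i}\}$ by \[ D_{\frac{\delta}{\delta t^c}}\tfrac{\delta}{\delta t^b}=\chi^a_{bc}\tfrac{\delta}{\delta t^a},\quad D_{\frac{\delta}{\delta t^c}}\tfrac{\delta}{\delta x^j}=0,\quad D_{\frac{\delta}{\delta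 t^c}}\tfrac{\partial}{\partial p^f_j}=\chi^b_{fc}\tfrac{\partial}{\partial p^b_j}, \] \[ D_{\frac{\delta}{\delta x^k}}\tfrac{\delta}{\delta t^b}=0,\quad D_{\frac{\delta}{\delta x^k}}\tfrac{\delta}{\delta x^j}=\gamma^i_{jk}\tfrac{\delta}{\delta x^i},\quad D_{\frac{\delta}{\delta x^k}}\tfrac{\partial}{\partial p^b_s}=-\gamma^s_{ik}\tfrac{\partial}{\partial p^b_i}, \] and $D_{\frac{\partial}{\partial p^c_k}}$ of every adapted frame vector equal to $0$. Let $R(X,Y)Z=D_XD_YZ-D_YD_XZ-D_{[X,Y]}Z$ and $\mathrm{Ric}(Y,Z)=\mathrm{tr}(X\mapsto R(X,Y)Z)$. Then the only (possibly) nonvanishing adapted components of $\mathrm{Ric}$ are \[ \mathrm{Ric}\big(\tfrac{\delta}{\delta t^a},\tfrac{\delta}{\delta t^b}\big)=\chi_{ab},\qquad \mathrm{Ric}\big(\tfrac{\delta}{\delta x^i},\tfrac{\delta}{\delta x^j}\big)=\mathfrak{R}_{ij}, \] where $\chi_{ab}(t)$ and $\mathfrak{R}_{ij}(x)$ are the classical Ricci tensors of $h_{ab}$ and $\varphi_{ij}$ (defined with the same curvature and trace conventions for their Levi-Civita connections); all adapted components of $\mathrm{Ric}$ involving a vertical vector $\frac{\partial}{\partial p^a_i}$ or mixing $\frac{\delta}{\delta t^a}$ with $\frac{\delta}{\delta x^i}$ vanish.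
   Context: Indices $a,b,c,d,f,g$ run from $1$ to $\dim\mathcal{T}$, indices $i,j,k,r,s$ from $1$ to $n$; Einstein summation convention. The fibre coordinates of $J^{1*}(\mathcal{T},M)$ transform as $\tilde p^a_i=\frac{\partial \tilde t^a}{\partial t^b}\frac{\partial x^j}{\partial \tilde x^i}p^b_j$. The connection $D$ is the one the paper calls the generalized Cartan canonical connection $C\Gamma(N)=(\chi^a_{bc},0,\gamma^i_{jk},0)$ of the autonomous multi-time Hamilton space of electrodynamics, and $\mathrm{Ric}$ is its Ricci tensor. *)

From HB Require Import structures.
From mathcomp Require Import all_boot all_order all_algebra.
From mathcomp Require Import all_classical all_reals all_analysis.
Set Implicit Arguments. Unset Strict Implicit. Unset Printing Implicit Defensive.
Import Order.TTheory GRing.Theory Num.Theory.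
Import numFieldNormedType.Exports.
Local Open Scope classical_set_scope.
Local Open Scope ring_scope.

Section Generic.
Variable R : realType.

Section Smooth.
Variable V : normedModType R.
Fixpoint Ck (k : nat) (U : set V) (f : V -> R) : Prop :=
  match k with
  | 0 => forall x, U x -> {for x, continuous f}
  | k'.+1 => (forall x, U x -> differentiable f x) /\
             (forall v : V, Ck k' U (fun x => derive f x v))
  end.
Definition smooth_on (U : set V) (f : V -> R) := forall k, Ck k U f.
End Smooth.

(* E : frame of vector fields, th : dual coframe (th i x v = i-th component of
   v in the frame at x), G a b c = coefficient: D_{E c} (E b) = sum_a G a b c E a.
   The connection is extended to arbitrary vector fields by C^oo-linearity in
   the direction and the Leibniz rule. *)
Section Connection.
Variables (V : normedModType R) (I : finType).
Variables (E : I -> V -> V) (th : I -> V -> V -> R) (G : I -> I -> I -> V -> R).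

Definition vact (X : V -> V) (g : V -> R) : V -> R := fun x => derive g x (X x).

Definition cov (X Z : V -> V) : V -> V := fun x =>
  \sum_c th c x (X x) *:
    \sum_b (vact (E c) (fun y => th b y (Z y)) x *: E b x
            + th b x (Z x) *: \sum_a G a b c x *: E a x).

Definition lie (X Y : V -> V) : V -> V := fun x =>
  derive Y x (X x) - derive X x (Y x).

Definition curv (X Y Z : V -> V) : V -> V := fun x =>
  cov X (cov Y Z) x - cov Y (cov X Z) x - cov (lie X Y) Z x.

Definition ric (Y Z : V -> V) : V -> R := fun x =>
  \sum_a th a x (curv (E a) Y Z x).
End Connection.

Definition deltar (n : nat) (i : 'I_n) : 'rV[R]_n := delta_mx 0 i.

Definition pd (n : nat) (f : 'rV[R]_n -> R) (i : 'I_n) (x : 'rV[R]_n) : R :=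
  derive f x (deltar i).

Definition chris (n : nat) (g : 'rV[R]_n -> 'M[R]_n) (a b c : 'I_n)
    (x : 'rV[R]_n) : R :=
  2^-1 * \sum_d (invmx (g x)) a d *
     (pd (fun y => g y d c) b x + pd (fun y => g y d b) c x
      - pd (fun y => g y b c) d x).

Definition coordE (n : nat) (i : 'I_n) : 'rV[R]_n -> 'rV[R]_n := fun _ => deltar i.
Definition coordTh (n : nat) (i : 'I_n) (x v : 'rV[R]_n) : R := v 0 i.
Definition classicalRic (n : nat) (g : 'rV[R]_n -> 'M[R]_n) (a b : 'I_n)
  : 'rV[R]_n -> R :=
  ric (@coordE n) (@coordTh n) (fun a b c => chris g a b c)
      (coordE a) (coordE b).

Definition riemannian_on (n : nat) (U : set 'rV[R]_n) (g : 'rV[R]_n -> 'M[R]_n) :=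
  (forall a b, smooth_on U (fun x => g x a b)) /\
  (forall x, U x -> (g x)^T = g x) /\
  (forall x, U x -> forall v : 'rV[R]_n, v != 0 -> 0 < (v *m g x *m v^T) 0 0).

Definition semiriemannian_on (n : nat) (U : set 'rV[R]_n) (g : 'rV[R]_n -> 'M[R]_n) :=
  (forall a b, smooth_on U (fun x => g x a b)) /\
  (forall x, U x -> (g x)^T = g x) /\
  (forall x, U x -> \det (g x) != 0).

Section Jet.
Variables (m n : nat).
Definition Pt := ('rV[R]_m * ('rV[R]_n * 'M[R]_(m, n)))%type.
(* adapted frame indices: inl a ~ d/dt^a, inr (inl i) ~ d/dx^i,
   inr (inr (a,i)) ~ d/dp^a_i *)
Definition Idx := ('I_m + ('I_n + ('I_m * 'I_n)))%type.

Variables (chi : 'I_m -> 'I_m -> 'I_m -> 'rV[R]_m -> R)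
          (gam : 'I_n -> 'I_n -> 'I_n -> 'rV[R]_n -> R)
          (mass e : R) (A : 'rV[R]_m * 'rV[R]_n -> 'M[R]_(m, n)).

Definition N2 (f : 'I_m) (r i : 'I_n) (z : Pt) : R :=
  let t := z.1 in let x := z.2.1 in let p := z.2.2 in
  \sum_s gam s r i x * (2 * e / mass * A (t, x) f s - p f s)
  - e / mass * (derive (fun y => A (t, y) f r) x (deltar i)
                + derive (fun y => A (t, y) f i) x (deltar r)).

Definition adaptedE (al : Idx) (z : Pt) : Pt :=
  match al with
  | inl a => (deltar a, (0, \matrix_(f, r) - \sum_g chi f a g z.1 * z.2.2 g r))
  | inr (inl i) => (0, (deltar i, \matrix_(f, r) - N2 f r i z))
  | inr (inr (f, r)) => (0, (0, delta_mx f r))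
  end.

Definition adaptedTh (al : Idx) (z v : Pt) : R :=
  match al with
  | inl a => v.1 0 a
  | inr (inl i) => v.2.1 0 i
  | inr (inr (f, r)) => v.2.2 f r + \sum_a (\sum_g chi f a g z.1 * z.2.2 g r) * v.1 0 a
                        + \sum_i N2 f r i z * v.2.1 0 i
  end.

Definition GammaD (a b c : Idx) (z : Pt) : R :=
  match a, b, c with
  | inl a', inl b', inl c' => chi a' b' c' z.1
  | inr (inr (b0, j0)), inr (inr (f, j)), inl c' =>
      if j0 == j then chi b0 f c' z.1 else 0
  | inr (inl i), inr (inl j), inr (inl k) => gam i j k z.2.1
  | inr (inr (b0, i)), inr (inr (b, s)), inr (inl k) =>
      if b0 == b then - gam s i k z.2.1 else 0
  | _, _, _ => 0
  end.

Definition RicD (al be : Idx) : Pt -> R :=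
  ric adaptedE adaptedTh GammaD (adaptedE al) (adaptedE be).
End Jet.
End Generic.

From HB Require Import structures.
From mathcomp Require Import all_boot all_order all_algebra.
From mathcomp Require Import all_classical all_reals all_analysis.
From mathcomp Require Import ring.
Import Order.TTheory GRing.Theory Num.Theory.
Import numFieldNormedType.Exports.
Local Open Scope classical_set_scope.
Local Open Scope ring_scope.
Set Implicit Arguments. Unset Strict Implicit.

(* In any frame E with dual coframe th, the trace of the curvature reads
     Ric(E b1, E b0) = sum_a [ E_a G^a_(b0 b1) - E_(b1) G^a_(b0 a)
                   + sum_b (G^b_(b0 b1) G^a_(b a) - G^b_(b0 a) G^a_(b b1))
                   - sum_c th^c([E_a, E_b1]) G^a_(b0 c) ].
   For the adapted frame the t- and x-components of every frame vector are
   constant, so all brackets are vertical, and the bracket term dies because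
   D along a vertical direction is zero.  The coefficients depend only on
   (t, x) and map the t-, x- and p-blocks to themselves, so vertical
   derivatives vanish and the trace splits into the Ricci tensors of chi and
   gam, all mixed and vertical entries being zero. *)

Lemma sum_mulrb (W : nmodType) (I : finType) (i0 : I) (F : I -> W) :
  \sum_i F i *+ (i == i0) = F i0.
Proof.
rewrite (bigD1 i0) //= eqxx mulr1n big1 ?addr0 // => i /negbTE ->.
exact: mulr0n.
Qed.

Section FrameCalculus.
Variables (R : realType) (V : normedModType R) (I : finType).
Variables (E : I -> V -> V) (th : I -> V -> V -> R) (G : I -> I -> I -> V -> R).
Hypothesis coframe_frame : forall a b y, th a y (E b y) = (a == b)%:R.
Hypothesis coframeD : forall a y u v, th a y (u + v) = th a y u + th a y v.
Hypothesis coframeZ : forall a y k v, th a y (k *: v) = k * th a y v.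

Lemma coframe_sum a y (F : I -> V) : th a y (\sum_b F b) = \sum_b th a y (F b).
Proof.
have coframe0 : th a y 0 = 0 by rewrite -(scale0r (0 : V)) coframeZ mul0r.
exact: (big_morph _ (coframeD a y) coframe0).
Qed.

Lemma coframe_comb a y (k : I -> R) : th a y (\sum_b k b *: E b y) = k a.
Proof.
rewrite coframe_sum (eq_bigr (fun b => k b *+ (b == a))) ?sum_mulrb //.
by move=> b _; rewrite coframeZ coframe_frame eq_sym mulr_natr.
Qed.

Lemma vact_coframe_frame X a b : vact X (fun y => th a y (E b y)) = 0.
Proof.
apply: funext => y; rewrite /vact.
have -> : (fun y => th a y (E b y)) = cst (a == b)%:R.
  by apply: funext => y'; rewrite coframe_frame.
exact: derive_cst.
Qed.

Lemma coframe_cov a X Z y :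
  th a y (cov E th G X Z y) =
  \sum_c th c y (X y) * (vact (E c) (fun y => th a y (Z y)) y
                         + \sum_b th b y (Z y) * G a b c y).
Proof.
rewrite /cov coframe_sum; apply: eq_bigr => c _.
rewrite coframeZ coframe_sum; congr (_ * _).
under eq_bigr do rewrite coframeD coframeZ coframe_frame coframeZ coframe_comb.
rewrite big_split /=; congr (_ + _).
by rewrite (eq_bigr (fun b => vact (E c) (fun y => th b y (Z y)) y *+ (b == a)))
  ?sum_mulrb // => b _; rewrite eq_sym mulr_natr.
Qed.

Lemma sum_coframe_frame c0 y (k : I -> R) : \sum_c th c y (E c0 y) * k c = k c0.
Proof.
by rewrite -(sum_mulrb c0 k); apply: eq_bigr => c _; rewrite coframe_frame mulr_natl.
Qed.

Lemma coframe_cov_frame a b X y :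
  th a y (cov E th G X (E b) y) = \sum_c th c y (X y) * G a b c y.
Proof.
rewrite coframe_cov; apply: eq_bigr => c _.
by rewrite vact_coframe_frame add0r sum_coframe_frame.
Qed.

Lemma coframe_cov_frames a b c y : th a y (cov E th G (E c) (E b) y) = G a b c y.
Proof. by rewrite coframe_cov_frame sum_coframe_frame. Qed.

Lemma coframe_cov_cov_frames a b c1 c0 y :
  th a y (cov E th G (E c1) (cov E th G (E c0) (E b)) y) =
  vact (E c1) (G a b c0) y + \sum_b' G b' b c0 y * G a b' c1 y.
Proof.
rewrite coframe_cov sum_coframe_frame.
under eq_bigr do rewrite coframe_cov_frames.
suff -> : (fun y => th a y (cov E th G (E c0) (E b) y)) = G a b c0 by [].
by apply: funext => y'; rewrite coframe_cov_frames.
Qed.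

Definition ricci_summand (z : V) (b1 b0 a : I) : R :=
  vact (E a) (G a b0 b1) z - vact (E b1) (G a b0 a) z
  + \sum_b (G b b0 b1 z * G a b a z - G b b0 a z * G a b b1 z).

Lemma ric_frameE b1 b0 z :
  ric E th G (E b1) (E b0) z =
  \sum_a (ricci_summand z b1 b0 a
          - \sum_c th c z (lie (E a) (E b1) z) * G a b0 c z).
Proof.
rewrite /ric; apply: eq_bigr => a _.
have coframeB u v : th a z (u - v) = th a z u - th a z v.
  by rewrite coframeD -scaleN1r coframeZ mulN1r.
rewrite /curv !coframeB !coframe_cov_cov_frames coframe_cov_frame.
by rewrite /ricci_summand sumrB; ring.
Qed.
End FrameCalculus.

Section CoordinateFrame.
Variables (R : realType) (k : nat).

Lemma coordTh_frame (a b : 'I_k) (y : 'rV[R]_k) :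
  coordTh a y (coordE b y) = (a == b)%:R.
Proof. by rewrite /coordTh /coordE /deltar mxE eqxx eq_sym. Qed.

Lemma coordThD (a : 'I_k) (y u v : 'rV[R]_k) :
  coordTh a y (u + v) = coordTh a y u + coordTh a y v.
Proof. by rewrite /coordTh mxE. Qed.

Lemma coordThZ (a : 'I_k) (y : 'rV[R]_k) c v :
  coordTh a y (c *: v) = c * coordTh a y v.
Proof. by rewrite /coordTh mxE. Qed.

Lemma sum_mul_deltar (b : 'I_k) (F : 'I_k -> R) : \sum_a F a * deltar R b 0 a = F b.
Proof.
rewrite (bigD1 b) //= big1 ?addr0; first by rewrite /deltar mxE !eqxx mulr1.
by move=> a /negbTE nab; rewrite /deltar mxE nab andbF mulr0.
Qed.

Lemma sum_mul_row0 (F : 'I_k -> R) : \sum_a F a * (0 : 'rV[R]_k) 0 a = 0.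
Proof. by rewrite big1 // => a _; rewrite mxE mulr0. Qed.

Lemma lie_coordE (a b : 'I_k) : lie (@coordE R k a) (coordE b) = 0.
Proof. by apply: funext => y; rewrite /lie !derive_cst subrr. Qed.

Lemma vact_coordE g (i : 'I_k) x : vact (@coordE R k i) g x = pd g i x.
Proof. by []. Qed.

Lemma ric_coordE (Ga : 'I_k -> 'I_k -> 'I_k -> 'rV[R]_k -> R) b1 b0 x :
  ric (@coordE R k) (@coordTh R k) Ga (coordE b1) (coordE b0) x =
  \sum_a ricci_summand (@coordE R k) Ga x b1 b0 a.
Proof.
rewrite (ric_frameE Ga coordTh_frame coordThD coordThZ); apply: eq_bigr => a _.
rewrite lie_coordE big1 ?subr0 // => c _.
by rewrite /coordTh mxE mul0r.
Qed.
End CoordinateFrame.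

Section Derivatives.
Variable R : realType.

(* ['D_v F z] is a limit, which defaults to [point] when the difference
   quotient diverges; hence the hypothesis on [L point]. *)
Lemma derive_linear_cst (U W W' : normedModType R) (L : {linear W -> W'})
    (F : U -> W) z v :
  continuous L -> L point = 0 -> (forall y, L (F y) = L (F z)) ->
  L ('D_v F z) = 0.
Proof.
move=> Lcont Lpoint LF; rewrite /derive; set q := fun h : R => _.
have [cq|ncq] := pselect (cvg (q @ 0^')); last by rewrite dvgP.
have Lq : L \o q = cst 0.
  by apply: funext => h; rewrite /q /= linearZ linearB /= LF subrr scaler0.
have Lcvg : (L \o q) @ 0^' --> L (lim (q @ 0^')).
  exact: cvg_trans (cvg_app L cq) (Lcont _).
rewrite Lq in Lcvg.
exact: (cvg_unique _ Lcvg (cvg_cst 0)).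
Qed.

Lemma derive_eq_along_lines (V V' W : normedModType R) (f : V -> W) (g : V' -> W)
    x y v w :
  (forall h : R, f (h *: v + x) = g (h *: w + y)) -> 'D_v f x = 'D_w g y.
Proof.
move=> fg; have fgxy : f x = g y by have := fg 0; rewrite !scale0r !add0r.
rewrite /derive.
suff -> : (fun h : R => h^-1 *: ((f \o shift x) (h *: v) - f x)) =
          (fun h : R => h^-1 *: ((g \o shift y) (h *: w) - g y)) by [].
by apply: funext => h; rewrite /= fg fgxy.
Qed.
End Derivatives.

Section AdaptedFrame.
Variables (R : realType) (m n : nat).
Variables (chi : 'I_m -> 'I_m -> 'I_m -> 'rV[R]_m -> R)
          (gam : 'I_n -> 'I_n -> 'I_n -> 'rV[R]_n -> R)
          (mass e : R) (A : 'rV[R]_m * 'rV[R]_n -> 'M[R]_(m, n)).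
Local Notation Pt := (Pt R m n).
Local Notation Idx := (Idx m n).
Local Notation E := (adaptedE chi gam mass e A).
Local Notation th := (adaptedTh chi gam mass e A).
Local Notation G := (GammaD chi gam).

Lemma sum_Idx (F : Idx -> R) :
  \sum_a F a = \sum_a F (inl a) + \sum_i F (inr (inl i))
               + \sum_f \sum_r F (inr (inr (f, r))).
Proof.
rewrite !big_sumType /= addrA pair_bigA /=.
by congr (_ + _); apply: eq_bigr => -[f r].
Qed.

Lemma adaptedTh_frame a b y : th a y (E b y) = (a == b)%:R.
Proof.
case: a => [a|[i|[f r]]]; case: b => [b|[j|[f' r']]] /=;
  rewrite ?mxE /= ?sum_mul_deltar ?sum_mul_row0 ?addr0 //.
- by rewrite addrC subrr.
- by rewrite addrC subrr.
Qed.

Lemma adaptedThD a y u v : th a y (u + v) = th a y u + th a y v.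
Proof.
case: a => [a|[i|[f r]]] /=; rewrite ?mxE //.
under eq_bigr do rewrite mxE mulrDr.
under [X in _ + _ + X = _]eq_bigr do rewrite mxE mulrDr.
by rewrite !big_split /=; ring.
Qed.

Lemma adaptedThZ a y k v : th a y (k *: v) = k * th a y v.
Proof.
case: a => [a|[i|[f r]]] /=; rewrite ?mxE //.
under eq_bigr do rewrite mxE mulrCA.
under [X in _ + _ + X = _]eq_bigr do rewrite mxE mulrCA.
by rewrite -!mulr_sumr; ring.
Qed.

Lemma point_Pt : (point : Pt) = 0.
Proof. by congr (_, (_, _)); apply/matrixP => i j; rewrite !mxE. Qed.

Lemma fst_continuous : continuous (fst : Pt -> 'rV[R]_m).
Proof. by move=> x; exact: cvg_fst. Qed.

Lemma fst_snd_continuous : continuous (fst \o snd : Pt -> 'rV[R]_n).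
Proof. by move=> x; apply: continuous_comp; [exact: cvg_snd | exact: cvg_fst]. Qed.

Lemma derive_adaptedE_t b z v : ('D_v (E b) z).1 = 0.
Proof.
have E_t y : (E b y).1 = (E b z).1 by case: b => [?|[?|[??]]].
have point_t : (point : Pt).1 = 0 by rewrite point_Pt.
exact: (@derive_linear_cst R _ _ _ fst (E b) z v fst_continuous point_t E_t).
Qed.

Lemma derive_adaptedE_x b z v : ('D_v (E b) z).2.1 = 0.
Proof.
have E_x y : (fst \o snd) (E b y) = (fst \o snd) (E b z).
  by case: b => [?|[?|[??]]].
have point_x : (fst \o snd) (point : Pt) = 0 by rewrite point_Pt.
exact: (@derive_linear_cst R _ _ _ (fst \o snd) (E b) z v fst_snd_continuous
  point_x E_x).
Qed.

Lemma lie_adaptedE_t c1 c0 z : (lie (E c1) (E c0) z).1 = 0.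
Proof.
change (('D_(E c1 z) (E c0) z).1 - ('D_(E c0 z) (E c1) z).1 = 0).
by rewrite [X in X - _]derive_adaptedE_t [X in _ - X]derive_adaptedE_t subrr.
Qed.

Lemma lie_adaptedE_x c1 c0 z : (lie (E c1) (E c0) z).2.1 = 0.
Proof.
change (('D_(E c1 z) (E c0) z).2.1 - ('D_(E c0 z) (E c1) z).2.1 = 0).
by rewrite [X in X - _]derive_adaptedE_x [X in _ - X]derive_adaptedE_x subrr.
Qed.

Lemma GammaD_vertical a b p y : G a b (inr (inr p)) y = 0.
Proof. by case: a => [?|[?|[??]]]; case: b => [?|[?|[??]]]; case: p. Qed.

Lemma adapted_torsion_term a b c1 c0 z :
  \sum_c th c z (lie (E c1) (E c0) z) * G a b c z = 0.
Proof.
have th_t c v : th (inl c) z v = v.1 0 c by [].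
have th_x i v : th (inr (inl i)) z v = v.2.1 0 i by [].
rewrite sum_Idx.
rewrite [X in X + _ + _]big1 => [|c _]; last first.
  by rewrite th_t lie_adaptedE_t mxE mul0r.
rewrite [X in _ + X + _]big1 => [|i _]; last first.
  by rewrite th_x lie_adaptedE_x mxE mul0r.
by rewrite big1 ?addr0 // => f _; rewrite big1 // => r _; rewrite GammaD_vertical mulr0.
Qed.

Definition base (y : Pt) : Pt := (y.1, (y.2.1, 0)).

Lemma GammaD_base a b c y : G a b c (base y) = G a b c y.
Proof.
by case: a => [?|[?|[??]]]; case: b => [?|[?|[??]]]; case: c => [?|[?|[??]]].
Qed.

Lemma vact_adaptedE (g : Pt -> R) d z : (forall y, g (base y) = g y) ->
  vact (E d) g z =
  match d with
  | inl a => pd (fun t => g (t, z.2)) a z.1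
  | inr (inl i) => pd (fun x => g (z.1, (x, z.2.2))) i z.2.1
  | inr (inr _) => 0
  end.
Proof.
move=> g_base; rewrite /vact /pd; case: d => [a|[i|[f r]]].
1,2: apply: derive_eq_along_lines => h;
  by rewrite -[LHS]g_base -[RHS]g_base /base /= scaler0 add0r.
rewrite (@derive_eq_along_lines _ _ _ _ g (cst (g z)) z z _ (E (inr (inr (f, r))) z)).
  exact: derive_cst.
by move=> h; rewrite -[LHS]g_base -(g_base z) /base /= !scaler0 !add0r.
Qed.

Lemma ricci_summand_adaptedE b1 b0 a z :
  ricci_summand E G z b1 b0 a =
  match b1, b0, a with
  | inl b1, inl b0, inl a => ricci_summand (@coordE R m) chi z.1 b1 b0 a
  | inr (inl j1), inr (inl j0), inr (inl i) =>
      ricci_summand (@coordE R n) gam z.2.1 j1 j0 i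
  | _, _, _ => 0
  end.
Proof.
have sum_mul0l (J : finType) (F : J -> R) : \sum_j 0 * F j = 0.
  by rewrite big1 // => j _; rewrite mul0r.
have sum_mulr0 (J : finType) (F : J -> R) : \sum_j F j * 0 = 0.
  by rewrite big1 // => j _; rewrite mulr0.
have sum2_mul0l (J K : finType) (F : J -> K -> R) : \sum_j \sum_k 0 * F j k = 0.
  by rewrite big1 // => j _; rewrite sum_mul0l.
have sum2_mulr0 (J K : finType) (F : J -> K -> R) : \sum_j \sum_k F j k * 0 = 0.
  by rewrite big1 // => j _; rewrite sum_mulr0.
rewrite /ricci_summand !(vact_adaptedE _ _ (GammaD_base _ _ _)) !sumrB !sum_Idx.
case: b1 => [b1|[j1|[f1 r1]]]; case: b0 => [b0|[j0|[f0 r0]]];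
  case: a => [a|[i|[f r]]];
  rewrite /= ?vact_coordE /pd ?sumrB ?derive_cst ?sum2_mul0l ?sum2_mulr0 ?sum_mul0l ?sum_mulr0 ?big1_eq.
all: ring.
Qed.

Lemma RicD_adaptedE al be z :
  RicD chi gam mass e A al be z =
  match al, be with
  | inl b1, inl b0 => \sum_a ricci_summand (@coordE R m) chi z.1 b1 b0 a
  | inr (inl j1), inr (inl j0) =>
      \sum_i ricci_summand (@coordE R n) gam z.2.1 j1 j0 i
  | _, _ => 0
  end.
Proof.
rewrite /RicD (ric_frameE G adaptedTh_frame adaptedThD adaptedThZ).
under eq_bigr do rewrite adapted_torsion_term subr0 ricci_summand_adaptedE.
by rewrite sum_Idx; case: al => [b1|[j1|[f1 r1]]]; case: be => [b0|[j0|[f0 r0]]];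
  rewrite /= ?big1_eq ?addr0 ?add0r.
Qed.
End AdaptedFrame.

Theorem mainTheorem3 (R : realType) (m n : nat)
  (UT : set 'rV[R]_m) (UM : set 'rV[R]_n)
  (h : 'rV[R]_m -> 'M[R]_m) (phi : 'rV[R]_n -> 'M[R]_n)
  (mass e : R) (A : 'rV[R]_m * 'rV[R]_n -> 'M[R]_(m, n)) :
  open UT -> open UM ->
  riemannian_on UT h -> semiriemannian_on UM phi ->
  mass != 0 ->
  (forall f i, smooth_on (UT `*` UM) (fun tx => A tx f i)) ->
  forall (z : Pt R m n), UT z.1 -> UM z.2.1 ->
  forall al be : Idx m n,
    RicD (chris h) (chris phi) mass e A al be z =
    match al, be with
    | inl a, inl b => classicalRic h a b z.1
    | inr (inl i), inr (inl j) => classicalRic phi i j z.2.1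
    | _, _ => 0
    end.
Proof.
(* The identity is pointwise algebra in the connection coefficients: none of
   the metric, smoothness or [mass != 0] hypotheses is needed. *)
move=> _ _ _ _ _ _ z _ _ al be; rewrite RicD_adaptedE.
by case: al => [a|[i|[f r]]]; case: be => [b|[j|[f' r']]];
  rewrite // /classicalRic ric_coordE.
Qed.
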